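(* For every $I\in\mathcal I$, there is exactly one $\vartriangleleft$-minimal set in $\mathcal M(I)$.
   Context: Let $(a_i)_{i=1,\dots,n}$ be a sequence of distinct integers between $1$ and $n$, and set $a_0=0$; write $A=(a_i)_{i=0,1,\dots,n}$. A set $I\subseteq\{0\}\cup[n]$ is feasible if $a_i<a_j$ for all $i,j\in I$ with $i<j$; $\mathcal I$ denotes the family of feasible sets of maximum cardinality. Patience sorting: start with empty piles $P_0,\dots,P_n$; for $i=0,1,\dots,n$ in order, put $a_i$ on top of the pile $P_j$ with smallest index $j$ such that $P_j$ is empty or the top element of $P_j$ is greater than $a_i$. Let $P_0,\dots,P_k$ be the resulting nonempty piles. Say $a_u$ is placed below $a_v$ on a pile if both lie on the same pile and $a_u$ was put there before $a_v$. For $I,J\in\mathcal I$, write $I\vartriangleleft J$ if $I\setminus J=\{u\}$ and $J\setminus I=\{v\}$ for some $u,v$ such that $a_u$ is placed strictly below $a_v$ on pile $P_i$ for some $1\le i\le k$. For $I\in\mathcal I$, $\mathcal M(I)\subseteq\mathcal I$ is the smallest family containing $I$ such that whenever $J\in\mathcal M(I)$ and $J'\vartriangleleft J$ then $J'\in\mathcal M(I)$ (the lower set of $I$ in the reflexive–transitive closure of $\vartriangleleft$). A set $I\in\mathcal I$ is $\vartriangleleft$-minimal if there is no $J\in\mathcal I$ with $J\vartriangleleft I$. *)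

From mathcomp Require Import all_boot.
Set Implicit Arguments. Unset Strict Implicit. Unset Printing Implicit Defensive.

(* The sequence A = (a_0, a_1, ..., a_n) is given by a function a : nat -> nat;
   only the values a 0, ..., a n matter. Indices 0..n are 'I_n.+1. *)

Definition feasible (n : nat) (a : nat -> nat) (I : {set 'I_n.+1}) : Prop :=
  forall i j : 'I_n.+1, i \in I -> j \in I -> (i < j)%N -> a i < a j.

(* I belongs to the family \mathcal I of feasible sets of maximum cardinality. *)
Definition maxfeas (n : nat) (a : nat -> nat) (I : {set 'I_n.+1}) : Prop :=
  feasible a I /\ forall J : {set 'I_n.+1}, feasible a J -> #|J| <= #|I|.

(* Patience sorting.  The state is the sequence of top elements of the
   nonempty piles P_0, P_1, ... (in order).  A value x is put on the pile with
   smallest index j whose top is greater than x, or on the first empty pile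
   (index = number of nonempty piles) if there is none. *)
Definition ps_step (tops : seq nat) (x : nat) : seq nat :=
  set_nth 0 tops (find (fun t => x < t) tops) x.

Definition tops_before (a : nat -> nat) (i : nat) : seq nat :=
  foldl ps_step [::] (map a (iota 0 i)).

Definition pile (a : nat -> nat) (i : nat) : nat :=
  find (fun t => a i < t) (tops_before a i).

(* a_u is placed strictly below a_v on pile P_i for some i >= 1:
   same pile, index >= 1, and a_u put there earlier (u < v). *)
Definition placed_below (a : nat -> nat) (u v : nat) : Prop :=
  pile a u = pile a v /\ 1 <= pile a u /\ u < v.

Definition tri (n : nat) (a : nat -> nat) (I J : {set 'I_n.+1}) : Prop :=
  maxfeas a I /\ maxfeas a J /\
  exists u v : 'I_n.+1,
    I :\: J = [set u] /\ J :\: I = [set v] /\ placed_below a u v.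

(* M I J : J \in \mathcal M(I), the lower set of I for the reflexive-transitive
   closure of <| (the smallest family containing I closed under predecessors). *)
Inductive M (n : nat) (a : nat -> nat) (I : {set 'I_n.+1}) : {set 'I_n.+1} -> Prop :=
| M_refl : M a I I
| M_step : forall J J', M a I J -> tri a J' J -> M a I J'.

Definition tri_minimal (n : nat) (a : nat -> nat) (I : {set 'I_n.+1}) : Prop :=
  maxfeas a I /\ ~ (exists J : {set 'I_n.+1}, tri a J I).

From mathcomp Require Import all_boot zify.
From Stdlib Require Import Relations Classical.

Set Implicit Arguments.
Unset Strict Implicit.
Unset Printing Implicit Defensive.

(* Patience sorting puts a_j on a pile strictly to the right of the pile of
   every earlier a_i < a_j; hence the elements of a feasible set lie on distinct
   piles, and values decrease up each pile.  Let J1 <| J and J2 <| J replace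
   v1, v2 in J by u1, u2 placed below them.  If v1 = v2, the one of J1, J2 whose
   new element was placed earlier is <| the other.  If v1 <> v2, the set
   (J - v1 - v2) + u1 + u2 is still feasible (if u1 < u2 then u1 precedes v2,
   so a_u1 < a_v2 < a_u2) and is <| both J1 and J2.  So the reverse of <| is
   locally confluent; it terminates because the sum of the indices decreases
   along <|, and Newman's lemma gives the unique minimal set below I. *)

Section Newman.

Variables (T : Type) (R : relation T) (weight : T -> nat).

Hypothesis weight_R : forall x y, R x y -> weight y < weight x.

Hypothesis R_locally_confluent : forall x y z, R x y -> R x z ->
  exists2 w, clos_refl_trans T R y w & clos_refl_trans T R z w.

Definition normal (x : T) := ~ exists y, R x y.

Lemma R_weight_ind (P : T -> Prop) :
  (forall x, (forall y, R x y -> P y) -> P x) -> forall x, P x.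
Proof.
move=> IH x; have [k] := ubnP (weight x); elim: k x => // k IHk x wx.
by apply: IH => y /weight_R wy; apply: IHk; apply: leq_trans wy _.
Qed.

Lemma normal_form_exists x : exists2 y, clos_refl_trans T R x y & normal y.
Proof.
elim/R_weight_ind: x => x IH.
have [[y Rxy]|nx] := classic (exists y, R x y); last by exists x; first exact: rt_refl.
have [z yz nz] := IH y Rxy.
by exists z => //; apply: rt_trans yz; apply: rt_step.
Qed.

Lemma normal_form_unique x y z : clos_refl_trans T R x y -> clos_refl_trans T R x z ->
  normal y -> normal z -> y = z.
Proof.
elim/R_weight_ind: x y z => x IH y z /clos_rt_rt1n_iff [|x1 {}y Rx1 x1y]
  /clos_rt_rt1n_iff [|z1 {}z Rz1 z1z] ny nz //.
- by case: ny; exists z1.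
- by case: nz; exists x1.
have [w x1w z1w] := R_locally_confluent Rx1 Rz1.
have [u wu nu] := normal_form_exists w.
rewrite (IH x1 Rx1 y u (clos_rt1n_rt _ _ _ _ x1y) (rt_trans _ _ _ _ _ x1w wu)) //.
by rewrite (IH z1 Rz1 z u (clos_rt1n_rt _ _ _ _ z1z) (rt_trans _ _ _ _ _ z1w wu)).
Qed.

End Newman.

Lemma tops_before_S a j : tops_before a j.+1 = ps_step (tops_before a j) (a j).
Proof. by rewrite /tops_before -addn1 iotaD map_cat foldl_cat add0n. Qed.

Definition nondecreasing_seq (s : seq nat) :=
  forall q r, q <= r -> r < size s -> nth 0 s q <= nth 0 s r.

Section PatienceStep.

Variables (s : seq nat) (x : nat).

Let f := find (fun t => x < t) s.

Lemma lt_nth_find : f < size s -> x < nth 0 s f.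
Proof. by move=> fs; apply: (nth_find 0 (a := fun t => x < t)); rewrite has_find. Qed.

Lemma nth_before_find_le q : q < f -> nth 0 s q <= x.
Proof. by move/(before_find 0)/negbT; rewrite -leqNgt. Qed.

Lemma size_ps_step : size (ps_step s x) = maxn f.+1 (size s).
Proof. exact: size_set_nth. Qed.

Lemma nth_ps_step_find : nth 0 (ps_step s x) f = x.
Proof. by rewrite nth_set_nth /= eqxx. Qed.

Lemma nth_ps_step_le k : k < size s -> nth 0 (ps_step s x) k <= nth 0 s k.
Proof.
move=> ks; rewrite nth_set_nth /= -/f; case: (eqVneq k f) => [kf|//].
by rewrite kf; apply/ltnW/lt_nth_find; rewrite -kf.
Qed.

Lemma ps_step_nondecreasing : nondecreasing_seq s -> nondecreasing_seq (ps_step s x).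
Proof.
move=> sorted_s q r qr; rewrite size_ps_step !nth_set_nth /= -/f => rs.
have fs : f <= size s by apply: find_size.
case: (q =P f) => [qf|qf]; case: (r =P f) => [rf|rf] //.
- have := lt_nth_find; have := sorted_s f r; lia.
- by apply: nth_before_find_le; lia.
- by apply: sorted_s => //; lia.
Qed.

End PatienceStep.

Lemma tops_before_nondecreasing a j : nondecreasing_seq (tops_before a j).
Proof.
elim: j => [|j IH]; last by rewrite tops_before_S; apply: ps_step_nondecreasing.
by move=> q r; rewrite /tops_before /=.
Qed.

Lemma tops_before_pile a i j : i < j ->
  pile a i < size (tops_before a j) /\ nth 0 (tops_before a j) (pile a i) <= a i.
Proof.
elim: j => // j IH; rewrite ltnS leq_eqVlt tops_before_S => /predU1P [->|/IH [lt le]].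
  by rewrite size_ps_step nth_ps_step_find; split; [apply: leq_maxl|].
split; first by rewrite size_ps_step leq_max lt orbT.
exact: leq_trans (nth_ps_step_le _ lt) le.
Qed.

Lemma ltn_pile a i j : i < j -> a i < a j -> pile a i < pile a j.
Proof.
move=> ij aij; have [ilt ile] := tops_before_pile a ij.
have sorted_s := @tops_before_nondecreasing a j.
set s := tops_before a j in ilt ile sorted_s.
rewrite ltnNge; apply/negP => ji.
have jlt : pile a j < size s by apply: leq_ltn_trans ilt.
have ajlt : a j < nth 0 s (pile a j) := lt_nth_find jlt.
have := sorted_s _ _ ji ilt; lia.
Qed.

Lemma setU1D1C (T : finType) (u v : T) (A : {set T}) :
  u != v -> (u |: A) :\ v = u |: (A :\ v).
Proof.
move=> uv; apply/setP => x; rewrite !inE.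
by case: (eqVneq x u) => [->|]; rewrite ?(negbTE uv) ?andbF.
Qed.

Lemma feasible_cover n a (K J1 J2 : {set 'I_n.+1}) (u1 u2 : 'I_n.+1) :
  feasible a J1 -> feasible a J2 -> K :\ u2 \subset J1 -> K :\ u1 \subset J2 ->
  u1 != u2 -> (u1 < u2 -> a u1 < a u2) -> (u2 < u1 -> a u2 < a u1) -> feasible a K.
Proof.
move=> FJ1 FJ2 sK1 sK2 u12 l12 l21 x y xK yK xy.
have inD1 z w : z \in K -> z != w -> z \in K :\ w by rewrite !inE => -> ->.
have [/andP [xu2 yu2]|] := boolP ((x != u2) && (y != u2)).
  by apply: FJ1 xy; apply/(subsetP sK1)/inD1.
move=> not_in_J1; have [/andP [xu1 yu1]|] := boolP ((x != u1) && (y != u1)).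
  by apply: FJ2 xy; apply/(subsetP sK2)/inD1.
move: not_in_J1; rewrite !negb_and !negbK => /orP [] /eqP ? /orP [] /eqP ?; subst;
  by rewrite ?ltnn ?eqxx in xy u12 *; auto.
Qed.

Section Swaps.

Variables (n : nat) (a : nat -> nat).
Hypothesis a0 : a 0 = 0.
Hypothesis a_range : forall i, 1 <= i <= n -> 1 <= a i <= n.
Hypothesis a_inj : forall i j, 1 <= i <= n -> 1 <= j <= n -> a i = a j -> i = j.

Implicit Types (i j u v : 'I_n.+1) (J K : {set 'I_n.+1}).

Lemma a_neq i j : i < j -> a i != a j.
Proof.
move=> ij; have jn := ltn_ord j; case: (nat_of_ord i) ij => [|i'] ij.
  by rewrite a0; have := @a_range j; lia.
by apply/eqP => E; have := @a_inj i'.+1 j; lia.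
Qed.

Lemma a_gt_of_pile_eq i j : i < j -> pile a i = pile a j -> a j < a i.
Proof.
move=> ij pe; have := @ltn_pile a i j ij; have := a_neq ij; rewrite pe; lia.
Qed.

Lemma feasible_pile_inj J : feasible a J -> {in J &, injective (fun i => pile a i)}.
Proof.
move=> FJ x y xJ yJ pe; apply: val_inj.
case: (ltngtP x y) => [xy|yx|//].
  by have := ltn_pile xy (FJ _ _ xJ yJ xy); rewrite pe ltnn.
by have := ltn_pile yx (FJ _ _ yJ xJ yx); rewrite pe ltnn.
Qed.

Definition index_sum J := \sum_(i in J) (i : nat).

Lemma card_swap u v J : u \notin J -> v \in J -> #|u |: (J :\ v)| = #|J|.
Proof.
move=> uJ vJ; rewrite cardsU1 (cardsD1 v J) vJ !inE negb_and uJ orbT.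
by rewrite add1n.
Qed.

Lemma maxfeas_swap u v J : maxfeas a J -> feasible a (u |: (J :\ v)) ->
  u \notin J -> v \in J -> maxfeas a (u |: (J :\ v)).
Proof.
by move=> [_ maxJ] FK uJ vJ; split => // L FL; rewrite card_swap //; apply: maxJ.
Qed.

Lemma tri_swap J' J : tri a J' J -> exists u v,
  [/\ J' = u |: (J :\ v), u \notin J, v \in J & placed_below a u v].
Proof.
case=> _ [_ [u [v [E1 [E2 pb]]]]].
have e1 : J' :\: J =i [set u] by rewrite E1.
have e2 : J :\: J' =i [set v] by rewrite E2.
have := e1 u; have := e2 v; rewrite !inE !eqxx => /andP [vJ' vJ] /andP [uJ uJ'].
exists u, v; split => //; apply/setP => x; have := e1 x; have := e2 x; rewrite !inE.
by case: (x \in J') (x \in J) => [] [] /= <- <-.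
Qed.

Lemma tri_index_sum J' J : tri a J' J -> index_sum J' < index_sum J.
Proof.
case/tri_swap => u [v [-> uJ vJ [_ [_ uv]]]].
rewrite /index_sum big_setU1 /=; last by rewrite !inE negb_and uJ orbT.
by rewrite (big_setD1 _ vJ) /= ltn_add2r.
Qed.

Lemma tri_intro K u v J : K = u |: (J :\ v) -> maxfeas a K -> maxfeas a J ->
  u \notin J -> v \in J -> placed_below a u v -> tri a K J.
Proof.
move=> -> mK mJ uJ vJ pb; do 2!split=> //; exists u, v.
have uv : u != v by apply: contraNneq uJ => ->.
split; [|split=> //]; apply/setP => x; rewrite !inE;
  case: (eqVneq x u) => [->|]; rewrite ?(negbTE uJ) ?(negbTE uv) ?vJ //=;
  case: (eqVneq x v) => [->|]; rewrite ?vJ //; by case: (x \in J).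
Qed.

Lemma lt_swapped u1 u2 v2 K : feasible a K -> u1 \in K -> v2 \in K -> u1 != v2 ->
  pile a u2 = pile a v2 -> u2 < v2 -> u1 < u2 -> a u1 < a u2.
Proof.
move=> FK u1K v2K u1v2 p2 l2 l12.
have l1 : u1 < v2.
  case: (ltngtP u1 v2) => [//|?|/val_inj E]; [lia|by rewrite E eqxx in u1v2].
by have := FK _ _ u1K v2K l1; have := a_gt_of_pile_eq l2 p2; lia.
Qed.

Let star := clos_refl_trans _ (transp _ (@tri n a)).

Lemma tri_confluent_same_target u1 u2 v J : maxfeas a (u1 |: (J :\ v)) ->
  maxfeas a (u2 |: (J :\ v)) -> u1 \notin J -> u2 \notin J ->
  placed_below a u1 v -> placed_below a u2 v ->
  exists2 L, star (u1 |: (J :\ v)) L & star (u2 |: (J :\ v)) L.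
Proof.
wlog l12 : u1 u2 / u1 <= u2 => [wlog mJ1 mJ2 u1J u2J pb1 pb2|].
  case: (leqP u1 u2) => [le|/ltnW ge]; first exact: wlog.
  by have [L ? ?] := wlog u2 u1 ge mJ2 mJ1 u2J u1J pb2 pb1; exists L.
move=> mJ1 mJ2 u1J u2J [p1 [pos1 _]] [p2 _].
exists (u1 |: (J :\ v)); first exact: rt_refl.
case: (eqVneq u1 u2) => [->|u12]; first exact: rt_refl.
have u2J' : u2 \notin J :\ v by rewrite !inE negb_and u2J orbT.
apply: rt_step; apply: (tri_intro (u := u1) (v := u2)) => //.
- by rewrite setU1K.
- by rewrite !inE negb_or u12 negb_and u1J orbT.
- by rewrite setU11.
- by split; [rewrite p1 p2|split; last rewrite ltn_neqAle u12 l12].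
Qed.

Lemma tri_confluent_distinct_targets u1 v1 u2 v2 J : maxfeas a J ->
  maxfeas a (u1 |: (J :\ v1)) -> maxfeas a (u2 |: (J :\ v2)) ->
  u1 \notin J -> u2 \notin J -> v1 \in J -> v2 \in J -> v1 != v2 ->
  placed_below a u1 v1 -> placed_below a u2 v2 ->
  exists2 L, star (u1 |: (J :\ v1)) L & star (u2 |: (J :\ v2)) L.
Proof.
move=> mJ mJ1 mJ2 u1J u2J v1J v2J v12 pb1 pb2.
have [[FJ _] [FJ1 _] [FJ2 _]] := And3 mJ mJ1 mJ2.
set J1 := u1 |: (J :\ v1) in mJ1 FJ1 *; set J2 := u2 |: (J :\ v2) in mJ2 FJ2 *.
have [p1 [_ l1]] := pb1; have [p2 [_ l2]] := pb2.
have u1v2 : u1 != v2 by apply: contraNneq u1J => ->.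
have u2v1 : u2 != v1 by apply: contraNneq u2J => ->.
have u12 : u1 != u2.
  apply: contra_neq v12 => u12; apply: (feasible_pile_inj FJ) => //.
  by rewrite -p1 -p2 u12.
have u1J1 : u1 \in J1 by rewrite setU11.
have u2J2 : u2 \in J2 by rewrite setU11.
have v2J1 : v2 \in J1 by rewrite !inE v2J (eq_sym v2 v1) v12 orbT.
have v1J2 : v1 \in J2 by rewrite !inE v1J v12 orbT.
have u2J1 : u2 \notin J1 by rewrite !inE negb_or eq_sym u12 negb_and u2J orbT.
have u1J2 : u1 \notin J2 by rewrite !inE negb_or u12 negb_and u1J orbT.
set K := u1 |: (u2 |: (J :\ v2 :\ v1)).
have EK1 : K = u2 |: (J1 :\ v2) by rewrite /K /J1 setU1D1C // setUCA !setDDl (setUC [set v1]).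
have EK2 : K = u1 |: (J2 :\ v1) by rewrite /K /J2 setU1D1C.
have FK : feasible a K.
  apply: (feasible_cover FJ1 FJ2 (u1 := u1) (u2 := u2)) => //.
  - by rewrite EK1 setU1K ?subD1set // in_setD1 (negbTE u2J1) andbF.
  - by rewrite EK2 setU1K ?subD1set // in_setD1 (negbTE u1J2) andbF.
  - exact: lt_swapped FJ1 u1J1 v2J1 u1v2 p2 l2.
  - by apply: lt_swapped FJ2 u2J2 v1J2 u2v1 p1 l1.
exists K; apply: rt_step; rewrite /transp.
- by apply: (tri_intro EK1) => //; rewrite EK1; apply: maxfeas_swap; rewrite -?EK1.
- by apply: (tri_intro EK2) => //; rewrite EK2; apply: maxfeas_swap; rewrite -?EK2.
Qed.

Lemma tri_locally_confluent J J1 J2 : tri a J1 J -> tri a J2 J ->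
  exists2 L, star J1 L & star J2 L.
Proof.
move=> t1 t2; have [mJ1 [mJ _]] := t1; have [mJ2 _] := t2.
have [u1 [v1 [E1 u1J v1J pb1]]] := tri_swap t1.
have [u2 [v2 [E2 u2J v2J pb2]]] := tri_swap t2.
rewrite {}E1 {}E2 in mJ1 mJ2 *; case: (eqVneq v1 v2) mJ2 pb2 => [<-|v12] mJ2 pb2.
- exact: tri_confluent_same_target.
- exact: tri_confluent_distinct_targets.
Qed.

End Swaps.

Lemma M_iff_clos_refl_trans n a (I J : {set 'I_n.+1}) :
  M a I J <-> clos_refl_trans _ (transp _ (tri a)) I J.
Proof.
split; first elim=> [|J0 J' _ IJ0 t]; first exact: rt_refl.
  by apply: (rt_trans _ _ _ J0); last apply: rt_step.
by move/clos_rt_rtn1_iff; elim=> [|J0 J' t _ IJ0]; [apply: M_refl|apply: M_step IJ0 t].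
Qed.

Lemma M_maxfeas n a (I J : {set 'I_n.+1}) : maxfeas a I -> M a I J -> maxfeas a J.
Proof. by move=> mI; elim=> // J0 J' _ _ []. Qed.

Theorem lemma2 (n : nat) (a : nat -> nat)
  (a0 : a 0 = 0)
  (a_range : forall i, 1 <= i <= n -> 1 <= a i <= n)
  (a_inj : forall i j, 1 <= i <= n -> 1 <= j <= n -> a i = a j -> i = j)
  (I : {set 'I_n.+1}) (HI : maxfeas a I) :
  exists! J : {set 'I_n.+1}, M a I J /\ tri_minimal a J.
Proof.
have weight_tri (J J' : {set 'I_n.+1}) :
  transp _ (tri a) J J' -> index_sum J' < index_sum J by exact: tri_index_sum.
have [J IJ nJ] := normal_form_exists weight_tri I.
have MIJ : M a I J by apply/M_iff_clos_refl_trans.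
exists J; split; first by split=> //; split=> //; apply: M_maxfeas MIJ.
move=> K [/M_iff_clos_refl_trans IK [_ nK]].
by apply: (normal_form_unique weight_tri (@tri_locally_confluent n a a0 a_range a_inj) IJ IK nJ).
Qed.
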